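(* Let $n_1\geq n_2\geq 2$ be integers and let $\delta=1$ if $n_1$ is even and $n_2$ is odd, and $\delta=0$ otherwise. Define $f:[n_1]\times[n_2]\to[n_1n_2]$ by $$f(i,j)=\begin{cases}(i-1)n_2+j & i \text{ odd},\ j\text{ odd},\\ (i-1)n_2+(n_2+1-j) & i\text{ even},\ j\text{ even},\\ (n_1-i)n_2+j+\delta & i\text{ odd},\ j\text{ even},\\ (n_1-i)n_2+(n_2+1-j+\delta) & i\text{ even},\ j\text{ odd}.\end{cases}$$ Then $f$ is a $Q_2$-magic vertex labeling of $\textsc{Grid}(n_1,n_2)$ with $Q_2$-magic sum $2(n_1n_2+1)$ if $n_1$ is odd or $n_2$ is even, and $2(n_1n_2+2)$ if $n_1$ is even and $n_2$ is odd.
   Context: $[k]=\{1,\ldots,k\}$. $\textsc{Grid}(n_1,n_2)$ is the graph with vertex set $[n_1]\times[n_2]$ in which $(i,j)$ and $(i',j')$ are adjacent iff $|i-i'|+|j-j'|=1$. $Q_2$ is the 4-cycle $\textsc{Grid}(2,2)$. A bijection $f:V\to\{1,\ldots,|V|\}$ on the vertex set of a graph $G=(V,E)$ is an $H$-magic vertex labeling if there is a constant $c$ (the $H$-magic sum) with $\sum_{v\in V(H')}f(v)=c$ for every subgraph $H'\subseteq G$ isomorphic to $H$. *)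

From mathcomp Require Import all_boot.
Set Implicit Arguments. Unset Strict Implicit. Unset Printing Implicit Defensive.

(* Vertices of Grid(n1,n2): pairs (a,b) : 'I_n1 * 'I_n2, standing for (a+1, b+1)
   in [n1] x [n2]. *)
Definition distn (m n : nat) : nat := (m - n) + (n - m).

Definition grid_adj (n1 n2 : nat) : rel ('I_n1 * 'I_n2) :=
  fun u v => distn u.1 v.1 + distn u.2 v.2 == 1.

Definition Q2_adj : rel ('I_2 * 'I_2) := @grid_adj 2 2.

(* g : VH -> V exhibits a subgraph of (V,e) isomorphic to (VH,eH):
   the subgraph has vertex set g(VH) and edge set g(E(H)). *)
Definition subgraph_copy (VH V : finType) (eH : rel VH) (e : rel V)
  (g : VH -> V) : Prop :=
  injective g /\ (forall x y, eH x y -> e (g x) (g y)).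

Definition labeling (V : finType) (f : V -> nat) : Prop :=
  injective f /\ (forall v, 1 <= f v <= #|V|) /\
  (forall k, 1 <= k <= #|V| -> exists v, f v = k).

Definition magic_labeling (VH V : finType) (eH : rel VH) (e : rel V)
  (f : V -> nat) (c : nat) : Prop :=
  labeling f /\
  forall g : VH -> V, subgraph_copy eH e g -> \sum_(x : VH) f (g x) = c.

Definition delta (n1 n2 : nat) : nat := if ~~ odd n1 && odd n2 then 1 else 0.

Definition flab (n1 n2 : nat) (v : 'I_n1 * 'I_n2) : nat :=
  let i := (v.1 : nat).+1 in let j := (v.2 : nat).+1 in
  let d := delta n1 n2 in
  if odd i then
    (if odd j then (i - 1) * n2 + j else (n1 - i) * n2 + j + d)
  else
    (if odd j then (n1 - i) * n2 + (n2 + 1 - j + d)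
     else (i - 1) * n2 + (n2 + 1 - j)).

From mathcomp Require Import all_boot zify.

Set Implicit Arguments.
Unset Strict Implicit.
Unset Printing Implicit Defensive.

(* In every unit square of the grid two labels lie on ascending rows, of the
   form (i-1) n2 + ..., and two on descending rows, of the form (n1-i) n2 + ...;
   the row parts add up to 2 (n1-1) n2 and the column offsets pair up to
   n2 + 1 (plus delta twice), so every unit square has label sum
   2 (n1 n2 + 1 + delta).  A copy of Q2 in a grid is a 4-cycle of distinct
   vertices, i.e. a unit square.  For bijectivity, f(v) - 1 is written in base
   n2 as block * n2 + offset; the pair (block, offset) determines v by a parity
   argument, and an injection into {1, ..., |V|} is onto by counting. *)

Lemma labeling_of_injective (V : finType) (f : V -> nat) :
  injective f -> (forall v, 0 < f v <= #|V|) -> labeling f.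
Proof.
move=> f_inj f_range; split; [exact: f_inj | split; first exact: f_range].
have lt_pred v : (f v).-1 < #|V| by have := f_range v; lia.
pose g v : 'I_#|V| := Ordinal (lt_pred v).
have g_inj : injective g.
  by move=> u v /(congr1 val) /= e; apply: f_inj; have := f_range u; have := f_range v; lia.
have [h _ hK] : bijective g by apply: inj_card_bij g_inj _; rewrite card_ord.
move=> k k_range; have lt_k : k.-1 < #|V| by lia.
exists (h (Ordinal lt_k)); have := congr1 val (hK (Ordinal lt_k)).
by have := f_range (h (Ordinal lt_k)); rewrite /=; lia.
Qed.

Lemma grid_stepP x y x' y' : distn x x' + distn y y' = 1 ->
  (x' = x.+1 /\ y' = y) \/ (x = x'.+1 /\ y' = y) \/
  (x' = x /\ y' = y.+1) \/ (x' = x /\ y = y'.+1).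
Proof. rewrite /distn; lia. Qed.

Section GridSquares.
Variables (n1 n2 S : nat) (G : nat -> nat -> nat).
Hypothesis unit_square_sum : forall a b, a.+1 < n1 -> b.+1 < n2 ->
  G a b + G a.+1 b + G a b.+1 + G a.+1 b.+1 = S.

Lemma grid_cycle4_sum x0 y0 x1 y1 x2 y2 x3 y3 :
  x0 < n1 -> x1 < n1 -> x2 < n1 -> x3 < n1 ->
  y0 < n2 -> y1 < n2 -> y2 < n2 -> y3 < n2 ->
  distn x0 x1 + distn y0 y1 = 1 -> distn x1 x2 + distn y1 y2 = 1 ->
  distn x2 x3 + distn y2 y3 = 1 -> distn x3 x0 + distn y3 y0 = 1 ->
  ~ (x0 = x2 /\ y0 = y2) -> ~ (x1 = x3 /\ y1 = y3) ->
  G x0 y0 + G x1 y1 + G x2 y2 + G x3 y3 = S.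
Proof.
move=> ? ? ? ? ? ? ? ? /grid_stepP s01 /grid_stepP s12 /grid_stepP s23 /grid_stepP s30.
move=> ne02 ne13.
(* In each consistent case the four points form the unit square whose lower
   corner is one of them. *)
case: s01 => [[? ?]|[[? ?]|[[? ?]|[? ?]]]]; case: s12 => [[? ?]|[[? ?]|[[? ?]|[? ?]]]];
case: s23 => [[? ?]|[[? ?]|[[? ?]|[? ?]]]]; case: s30 => [[? ?]|[[? ?]|[[? ?]|[? ?]]]];
  subst; first [ exfalso; lia
               | match goal with |- context [G ?a ?b] =>
                   rewrite -(@unit_square_sum a b); lia end ].
Qed.

Lemma grid_Q2_copy_sum (g : 'I_2 * 'I_2 -> 'I_n1 * 'I_n2) :
  subgraph_copy Q2_adj (@grid_adj n1 n2) g -> \sum_x G (g x).1 (g x).2 = S.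
Proof.
move=> [g_inj g_adj].
have g_ne u v : u != v ->
    ~ ((g u).1 = (g v).1 :> nat /\ (g u).2 = (g v).2 :> nat).
  move=> /negP uv [e1 e2]; apply: uv; apply/eqP/g_inj.
  by move: (g u) (g v) e1 e2 => [? ?] [? ?] /= /val_inj -> /val_inj ->.
have adj u v : Q2_adj u v -> distn (g u).1 (g v).1 + distn (g u).2 (g v).2 = 1.
  by move/g_adj/eqP.
have -> : \sum_x G (g x).1 (g x).2 = \sum_(i < 2) \sum_(j < 2) G (g (i, j)).1 (g (i, j)).2.
  by rewrite pair_bigA; apply: eq_bigr => -[].
rewrite !big_ord_recr !big_ord0 /=.
set o0 := widen_ord _ _; set o1 := ord_max.
rewrite !add0n addnA addnAC.
apply: grid_cycle4_sum; rewrite ?ltn_ord //.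
- exact: (adj (o0, o0) (o0, o1)).
- exact: (adj (o0, o1) (o1, o1)).
- exact: (adj (o1, o1) (o1, o0)).
- exact: (adj (o1, o0) (o0, o0)).
- exact: (g_ne (o0, o0) (o1, o1)).
- exact: (g_ne (o0, o1) (o1, o0)).
Qed.
End GridSquares.

(* The body of [flab] on unbounded coordinates, so that [flab v] is
   convertible to [flab_nat n1 n2 v.1 v.2]. *)
Definition flab_nat (n1 n2 a b : nat) : nat :=
  let i := a.+1 in let j := b.+1 in
  let d := delta n1 n2 in
  if odd i then
    (if odd j then (i - 1) * n2 + j else (n1 - i) * n2 + j + d)
  else
    (if odd j then (n1 - i) * n2 + (n2 + 1 - j + d)
     else (i - 1) * n2 + (n2 + 1 - j)).

Lemma flab_nat_square_sum n1 n2 a b : a.+1 < n1 -> b.+1 < n2 ->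
  flab_nat n1 n2 a b + flab_nat n1 n2 a.+1 b + flab_nat n1 n2 a b.+1
    + flab_nat n1 n2 a.+1 b.+1
  = (if ~~ odd n1 && odd n2 then 2 * (n1 * n2 + 2) else 2 * (n1 * n2 + 1)).
Proof.
move=> lt_a lt_b; have := leq_mul2r n2 a.+2 n1; rewrite lt_a orbT => hmul.
rewrite /flab_nat /delta /= !subn1 /= !mulnBl !mulSn in hmul *.
by case: (~~ odd n1 && odd n2); case: (odd a); case: (odd b) => /=; lia.
Qed.

(* When delta = 1, the label (n1-i) n2 + n2 + 1 of (i, 1) with i even spills
   into the next block. *)
Definition flab_block (n1 n2 a b : nat) : nat :=
  if odd a then
    (if odd b then a else if (delta n1 n2 == 1) && (b == 0) then n1 - a else n1.-1 - a)
  else (if odd b then n1.-1 - a else a).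

Definition flab_offset (n1 n2 a b : nat) : nat :=
  if odd a then
    (if odd b then n2.-1 - b
     else if delta n1 n2 == 1 then (if b == 0 then 0 else n2 - b) else n2.-1 - b)
  else (if odd b then b + delta n1 n2 else b).

Lemma flab_block_lt n1 n2 a b : a < n1 -> flab_block n1 n2 a b < n1.
Proof. by rewrite /flab_block => lt_a; do ?case: ifP; lia. Qed.

Lemma flab_offset_lt n1 n2 a b : b < n2 -> flab_offset n1 n2 a b < n2.
Proof.
move=> lt_b; have P2 := esym (odd_double_half n2); have Pb := esym (odd_double_half b).
rewrite /flab_offset /delta.
by case: (odd n1); case: (odd n2) P2; case: (odd a); case: (odd b) Pb => /= Pb P2;
  do ?case: eqP; lia.
Qed.

Lemma flab_natE n1 n2 a b : a < n1 -> b < n2 ->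
  flab_nat n1 n2 a b = (flab_block n1 n2 a b * n2 + flab_offset n1 n2 a b).+1.
Proof.
move=> lt_a lt_b; have := leq_mul2r n2 a.+1 n1; rewrite lt_a orbT mulSn => hmul.
have P1 := esym (odd_double_half n1); have P2 := esym (odd_double_half n2).
have Pb := esym (odd_double_half b).
rewrite /flab_nat /flab_block /flab_offset /delta /= !subn1 /=.
case: (odd n1) P1; case: (odd n2) P2; case: (odd a); case: (odd b) Pb => /= Pb P2 P1.
all: try case: eqP => [b0|nb0].
all: rewrite -?subn1 ?mulnBl ?mulSn ?mul1n; lia.
Qed.

Lemma flab_block_offset_inj n1 n2 a b a' b' :
  a < n1 -> b < n2 -> a' < n1 -> b' < n2 ->
  flab_block n1 n2 a b = flab_block n1 n2 a' b' ->
  flab_offset n1 n2 a b = flab_offset n1 n2 a' b' -> a = a' /\ b = b'.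
Proof.
move=> lt_a lt_b lt_a' lt_b'; rewrite /flab_block /flab_offset /delta.
have P1 := esym (odd_double_half n1); have P2 := esym (odd_double_half n2).
have Pa := esym (odd_double_half a); have Pb := esym (odd_double_half b).
have Pa' := esym (odd_double_half a'); have Pb' := esym (odd_double_half b').
case: (odd n1) P1 => P1; case: (odd n2) P2 => P2 /=;
case: (odd a) Pa => Pa; case: (odd b) Pb => Pb;
case: (odd a') Pa' => Pa'; case: (odd b') Pb' => Pb' /=;
do ?case: eqP => ?; lia.
Qed.

Lemma flab_inj n1 n2 : injective (@flab n1 n2).
Proof.
move=> [a b] [a' b']; rewrite /flab -/(flab_nat n1 n2 a b) -/(flab_nat n1 n2 a' b').
rewrite !flab_natE // => -[/(congr1 (edivn^~ n2))].
rewrite !edivn_eq ?flab_offset_lt // => -[eq_block eq_offset].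
by have [/val_inj -> /val_inj ->] :=
  flab_block_offset_inj (ltn_ord a) (ltn_ord b) (ltn_ord a') (ltn_ord b') eq_block eq_offset.
Qed.

Theorem lemma3 (n1 n2 : nat) (h2 : 2 <= n2) (h12 : n2 <= n1) :
  magic_labeling Q2_adj (@grid_adj n1 n2) (@flab n1 n2)
    (if ~~ odd n1 && odd n2 then 2 * (n1 * n2 + 2) else 2 * (n1 * n2 + 1)).
Proof.
split.
  apply: labeling_of_injective; first exact: flab_inj.
  move=> [a b]; rewrite card_prod !card_ord.
  have := flab_natE (ltn_ord a) (ltn_ord b).
  have := flab_block_lt n2 b (ltn_ord a); have := flab_offset_lt n1 a (ltn_ord b).
  rewrite /flab -/(flab_nat n1 n2 a b) => *; nia.
exact: grid_Q2_copy_sum (@flab_nat_square_sum n1 n2).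
Qed.
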